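(* Let $(\mathrm{FE}_{n,M,Q})_{n,M,Q\in\mathbb Z}\subseteq\mathbb N_0$ satisfy for all $n,M,Q\in\mathbb N$ that $\mathrm{FE}_{0,M,Q}=0$ and $$\mathrm{FE}_{n,M,Q}\le M^n+\sum_{l=0}^{n-1}\Big[QM^{n-l}\big(1+\mathrm{FE}_{l,M,Q}+\mathbb 1_{\mathbb N}(l)+\mathbb 1_{\mathbb N}(l)\,\mathrm{FE}_{l-1,M,Q}\big)\Big].$$ Then for all $N\in\mathbb N$, $\mathrm{FE}_{N,N,N}\le 8N^{2N}$.
   Context: $\mathbb 1_{\mathbb N}(l)$ equals $1$ if $l\in\mathbb N=\{1,2,\dots\}$ and $0$ otherwise. *)

From mathcomp Require Import all_boot all_order all_algebra.
Set Implicit Arguments. Unset Strict Implicit. Unset Printing Implicit Defensive.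
Import Order.TTheory GRing.Theory Num.Theory.

Definition indN (l : int) : nat := nat_of_bool (0 < l)%R.

From mathcomp Require Import all_boot all_order all_algebra.
From mathcomp Require Import zify.
Import Order.TTheory GRing.Theory Num.Theory.
Set Implicit Arguments.
Unset Strict Implicit.
Unset Printing Implicit Defensive.

(* Put y := N ^ 2 + N + 1 and let T n be the right-hand side of the recursion
   at M = Q = N.  Then T (n + 1) = N * T n + N ^ 2 * c n, where
   c n = 1 + FE n + 1 + FE (n - 1), and since N + N ^ 2 = y - 1 an induction
   yields FE n < y ^ n.  Finally y * (N - 1) <= N ^ 3, so y ^ N is at most
   N ^ (2 N) * (N / (N - 1)) ^ N, and Bernoulli's inequality, applied to each
   half of the exponent, bounds (N / (N - 1)) ^ N by 8. *)

Lemma bernoulli_predn m h : m.+1 ^ h * (m.+1 - h) <= m.+1 * m ^ h.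
Proof.
elim: h => [|h IH]; first by rewrite !expn0 muln1 mul1n subn0.
have IHm : m.+1 ^ h * (m.+1 - h) * m <= m.+1 * m ^ h * m by rewrite leq_mul2r IH orbT.
rewrite !expnS; move: IHm; move: (m.+1 ^ h) (m ^ h) => A B; nia.
Qed.

Lemma expn_half_le m h : h.*2 <= m.+1 -> m.+1 ^ h <= 2 * m ^ h.
Proof.
move=> h_le; have half : m.+1 <= 2 * (m.+1 - h) by move: h_le; rewrite -addnn; lia.
rewrite -(@leq_pmul2l m.+1) // mulnCA.
apply: (@leq_trans (2 * (m.+1 ^ h * (m.+1 - h)))).
  by rewrite mulnCA mulnC leq_mul2l half orbT.
by rewrite leq_mul2l bernoulli_predn orbT.
Qed.

Lemma expn_self_le m : 0 < m -> m.+1 ^ m.+1 <= 8 * m ^ m.+1.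
Proof.
move=> m_gt0; set h := m.+1./2.
have h_le : h.*2 <= m.+1 by rewrite -[leqRHS]odd_double_half leq_addl.
have odd_le : m.+1 ^ odd m.+1 <= 2 * m ^ odd m.+1.
  by case: odd; rewrite ?expn1 ?expn0 //; lia.
have split_exp k : k ^ m.+1 = k ^ h * k ^ h * k ^ odd m.+1.
  by rewrite -!expnD addnn addnC odd_double_half.
rewrite (split_exp m.+1) (split_exp m).
apply: (leq_trans (leq_mul (leq_mul (expn_half_le h_le) (expn_half_le h_le)) odd_le)).
by rewrite !mulnA; lia.
Qed.

Lemma cube_pow_le N : 0 < N -> (N * N + N + 1) ^ N <= 8 * N ^ (2 * N).
Proof.
case: N => [//|m] _; have [->|m_gt0] := posnP m; first by [].
have cube : (m.+1 * m.+1 + m.+1 + 1) * m <= m.+1 ^ 3 by rewrite !expnS expn0; nia.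
rewrite -(@leq_pmul2r (m ^ m.+1)) ?expn_gt0 ?m_gt0 // -expnMn.
apply: (@leq_trans ((m.+1 ^ 3) ^ m.+1)); first by rewrite leq_exp2r.
have -> : (m.+1 ^ 3) ^ m.+1 = m.+1 ^ m.+1 * m.+1 ^ (2 * m.+1).
  by rewrite -expnM -expnD; congr (_ ^ _); lia.
by rewrite mulnAC leq_mul2r expn_self_le ?orbT.
Qed.

Section Recurrence.

Variables (N : nat) (a : nat -> nat).

Definition fe_weight (l : nat) : nat := 1 + a l + (0 < l) + (0 < l) * a l.-1.

Definition fe_bound (n : nat) : nat :=
  N ^ n + \sum_(l < n) N * N ^ (n - l) * fe_weight l.

Lemma fe_boundS n : fe_bound n.+1 = N * fe_bound n + N * N * fe_weight n.
Proof.
rewrite /fe_bound big_ord_recr /= subSnn mulnDr big_distrr /= expnS -addnA.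
congr (_ + (_ + _)); apply: eq_bigr => l _.
by rewrite /= subSn ?expnS ?mulnA // ltnW.
Qed.

Hypotheses (N_gt0 : 0 < N) (a0 : a 0 = 0)
  (a_le_bound : forall n, 0 < n -> a n <= fe_bound n).

Lemma fe_growth n : (a n).+1 <= (N * N + N + 1) ^ n.
Proof.
set y := N * N + N + 1.
suff [] : (a n).+1 <= y ^ n /\ (fe_bound n.+1).+1 <= y ^ n.+1 by [].
elim: n => [|n [a_lt T_lt]].
  by rewrite a0 fe_boundS /fe_bound big_ord0 /fe_weight a0 /y; split; lia.
have aS_lt : (a n.+1).+1 <= y ^ n.+1.
  by apply: leq_trans T_lt; rewrite ltnS a_le_bound.
split=> //; rewrite fe_boundS /fe_weight /= -/(fe_bound n.+1).
(* Since N + N * N = y - 1, it remains to see that N * N * y ^ n < y ^ n.+1. *)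
have := a_le_bound (ltn0Sn n); move: T_lt a_lt; rewrite !expnS /y.
move: (fe_bound n.+1) (a n.+1) (a n) (_ ^ n) => T an1 an Y; nia.
Qed.

End Recurrence.

Lemma indN_nat (l : nat) : indN l = (0 < l).
Proof. by case: l. Qed.

Lemma indN_mul_pred (F : int -> int -> int -> nat) (M Q : int) (l : nat) :
  indN l * F (l%:Z - 1)%R M Q = (0 < l) * F l.-1 M Q.
Proof. by case: l => // l; rewrite (_ : (Posz l.+1 - 1)%R = l) // -addn1 PoszD addrK. Qed.

Theorem lemma3p16 (FE : int -> int -> int -> nat)
  (H0 : forall M Q : nat, (0 < M)%N -> (0 < Q)%N -> FE 0%R M Q = 0%N)
  (Hrec : forall n M Q : nat, (0 < n)%N -> (0 < M)%N -> (0 < Q)%N ->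
     (FE n M Q <= M ^ n + \sum_(l < n)
        Q * M ^ (n - l) * (1 + FE l M Q + indN l + indN l * FE (l%:Z - 1)%R M Q))%N) :
  forall N : nat, (0 < N)%N -> (FE N N N <= 8 * N ^ (2 * N))%N.
Proof.
move=> N N_gt0; pose a (m : nat) := FE m N N.
have a_le_bound n : 0 < n -> a n <= fe_bound N a n.
  move=> n_gt0; have := Hrec n N N n_gt0 N_gt0 N_gt0.
  by under eq_bigr do rewrite indN_mul_pred indN_nat.
have := fe_growth N_gt0 (H0 N N N_gt0 N_gt0) a_le_bound N.
by move=> /ltnW /leq_trans; apply; apply: cube_pow_le.
Qed.
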